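(* Let $k\ge 2$ be an integer and suppose $l$ is the minimal size of an alphabet over which there exists an infinite $k$th-power-free word. Then: (1) for every alphabet $\Sigma$ with $|\Sigma|\le l-1$ and every antimorphic involution $\theta$ on $\Sigma^*$, there is no infinite word over $\Sigma$ that is pseudo-$k$th-power-free with respect to $\theta$; and (2) for every finite alphabet $\Sigma'$ and every antimorphic involution $\theta$ on $\Sigma'^*$ with $|\operatorname{Trn}(\theta)|\ge l$, there is an infinite word over $\Sigma'$ that is pseudo-$k$th-power-free with respect to $\theta$.
   Context: Alphabets are totally ordered (letters $0,1,2,\dots$). A $k$th power is a word $u^k$ with $u$ nonempty; a word is $k$th-power-free if none of its factors (contiguous subwords) is a $k$th power. A function $\theta:\Sigma^*\to\Sigma^*$ is an antimorphic involution if $\theta(uv)=\theta(v)\theta(u)$ and $\theta(\theta(w))=w$. $\operatorname{Trn}(\theta)=\{a\in\Sigma:\theta(a)>a\}$. A nonempty word $w$ is a pseudo $k$th power with respect to $\theta$ if $w=u_1\cdots u_k$ where for all $1\le i,j\le k$, $u_i=u_j$ or $u_i=\theta(u_j)$; a word is pseudo-$k$th-power-free if no factor of it is a pseudo $k$th power. *)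

(* Alphabets are 'I_n (letters 0..n-1, totally ordered). *)
From mathcomp Require Import all_boot all_order.
Set Implicit Arguments. Unset Strict Implicit. Unset Printing Implicit Defensive.

Section Words.
Variable n : nat.
Notation word := (seq 'I_n).

Definition antimorphic_involution (th : word -> word) : Prop :=
  (forall u v, th (u ++ v) = th v ++ th u) /\ (forall w, th (th w) = w).

Definition Trn (th : word -> word) : {set 'I_n} :=
  [set a : 'I_n | [exists b : 'I_n, (th [:: a] == [:: b]) && (a < b)%N]].

Definition is_kth_power (k : nat) (s : word) : Prop :=
  exists u : word, u != [::] /\ s = flatten (nseq k u).

Definition is_pseudo_kth_power (th : word -> word) (k : nat) (s : word) : Prop :=
  s != [::] /\
  exists us : seq word, size us = k /\ flatten us = s /\
    forall i j, i < k -> j < k ->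
      nth [::] us i = nth [::] us j \/ nth [::] us i = th (nth [::] us j).

Definition factor (w : nat -> 'I_n) (i m : nat) : word :=
  [seq w (i + j) | j <- iota 0 m].

Definition kth_power_free_inf (k : nat) (w : nat -> 'I_n) : Prop :=
  forall i m, ~ is_kth_power k (factor w i m).

Definition pseudo_kth_power_free_inf (th : word -> word) (k : nat)
  (w : nat -> 'I_n) : Prop :=
  forall i m, ~ is_pseudo_kth_power th k (factor w i m).
End Words.

Definition min_kfree_alphabet (k l : nat) : Prop :=
  (exists w : nat -> 'I_l, kth_power_free_inf k w) /\
  (forall n, n < l -> ~ exists w : nat -> 'I_n, kth_power_free_inf k w).

(* Part (1): a k-th power is a pseudo k-th power, so a pseudo-k-th-power-free
   word is k-th-power-free and needs at least l letters.
   Part (2): if [a] is in Trn(theta) then theta(a) is a letter b > a, hence b is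
   not in Trn(theta).  So theta maps a nonempty word over Trn(theta) to a word
   ending outside Trn(theta), and in a pseudo k-th power over Trn(theta) all
   blocks must be equal: it is a genuine k-th power.  Relabelling a
   k-th-power-free word over l letters injectively into Trn(theta) therefore
   yields a pseudo-k-th-power-free word. *)

From mathcomp Require Import all_boot all_order.

Set Implicit Arguments.
Unset Strict Implicit.
Unset Printing Implicit Defensive.

Lemma flatten_nseq_eq0 (T : eqType) k (u : seq T) :
  0 < k -> (flatten (nseq k u) == [::]) = (u == [::]).
Proof. by case: k => // k _; case: u => //= ; elim: k. Qed.

Lemma flatten_neq0 (T : eqType) (ss : seq (seq T)) :
  flatten ss != [::] -> has (fun s => s != [::]) ss.
Proof. by elim: ss => //= -[|x s] ss IHss // /IHss. Qed.

Lemma map_flatten_nseq (T U : Type) (f : T -> U) k (u : seq T) :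
  map f (flatten (nseq k u)) = flatten (nseq k (map f u)).
Proof. by elim: k => //= k IHk; rewrite map_cat IHk. Qed.

Lemma factor_comp m n (f : 'I_m -> 'I_n) (w : nat -> 'I_m) i len :
  factor (f \o w) i len = map f (factor w i len).
Proof. by rewrite /factor -map_comp. Qed.

Lemma kth_power_pseudo n (th : seq 'I_n -> seq 'I_n) k s :
  0 < k -> is_kth_power k s -> is_pseudo_kth_power th k s.
Proof.
move=> k_gt0 [u [u_neq0 ->]]; split; first by rewrite flatten_nseq_eq0.
exists (nseq k u); split; first by rewrite size_nseq.
by split=> // i j ik jk; left; rewrite !nth_nseq ik jk.
Qed.

Lemma pseudo_kth_power_free_kth_power_free n (th : seq 'I_n -> seq 'I_n) k w :
  0 < k -> pseudo_kth_power_free_inf th k w -> kth_power_free_inf k w.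
Proof. by move=> k_gt0 wfree i len /(kth_power_pseudo th k_gt0); apply: wfree. Qed.

Lemma kth_power_map_inj m n (f : 'I_m -> 'I_n) k s :
  0 < k -> injective f -> is_kth_power k (map f s) -> is_kth_power k s.
Proof.
move=> k_gt0 f_inj [u [u_neq0 fs_eq]].
case: s fs_eq => [/esym/eqP|x0 s fs_eq]; first by rewrite flatten_nseq_eq0 // (negPf u_neq0).
pose g y := odflt x0 [pick x | f x == y].
have fK : cancel f g.
  by move=> x; rewrite /g; case: pickP => [x' /eqP/f_inj //|/(_ x)]; rewrite eqxx.
exists (map g u); split; first by case: (u) u_neq0.
by rewrite -map_flatten_nseq -fs_eq mapK.
Qed.

Section TransposedLetters.

Variables (n : nat) (th : seq 'I_n -> seq 'I_n).
Hypothesis th_inv : antimorphic_involution th.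

Lemma Trn_image a :
  a \in Trn th -> exists2 b, th [:: a] = [:: b] & b \notin Trn th.
Proof.
rewrite inE => /existsP[b /andP[/eqP tha ab]]; exists b => //.
apply/negP; rewrite inE => /existsP[c /andP[/eqP thb bc]].
have := th_inv.2 [:: a]; rewrite tha thb => -[ca].
by move: (ltn_trans ab bc); rewrite ca ltnn.
Qed.

Lemma Trn_word_image u :
  u != [::] -> all (mem (Trn th)) u -> ~~ all (mem (Trn th)) (th u).
Proof.
case: u => // a v _ /andP[aT _].
have [b tha bT] := Trn_image aT.
by rewrite -cat1s th_inv.1 tha all_cat /= (negPf bT) andbF.
Qed.

Lemma pseudo_kth_power_Trn k s :
  all (mem (Trn th)) s -> is_pseudo_kth_power th k s -> is_kth_power k s.
Proof.
move=> sT [s_neq0 [us [size_us [flat_us us_rel]]]].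
have blockT j : all (mem (Trn th)) (nth [::] us j).
  apply/allP=> x x_in; apply: (allP sT); rewrite -flat_us; apply/flattenP.
  exists (nth [::] us j) => //; rewrite mem_nth // ltnNge.
  by apply: contraL x_in => /(nth_default [::]) ->.
have [j jk uj_neq0] : exists2 j, j < k & nth [::] us j != [::].
  have /hasP[u u_in u_neq0] : has (fun u => u != [::]) us.
    by apply: flatten_neq0; rewrite flat_us.
  by exists (index u us); rewrite -?size_us ?index_mem ?nth_index.
exists (nth [::] us j); split => //.
rewrite -flat_us; congr flatten; apply: (@eq_from_nth _ [::]) => [|i ik]; first by rewrite size_nseq.
rewrite nth_nseq -size_us ik; rewrite size_us in ik.
case: (us_rel i j ik jk) => // ui_eq.
by have := Trn_word_image uj_neq0 (blockT j); rewrite -ui_eq blockT.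
Qed.

Lemma Trn_embedding l :
  l <= #|Trn th| -> exists2 f : 'I_l -> 'I_n, injective f & forall a, f a \in Trn th.
Proof.
move=> lT; exists (fun a => enum_val (widen_ord lT a)); last by move=> a; apply: enum_valP.
by move=> a b /enum_val_inj [] /val_inj.
Qed.

End TransposedLetters.

Theorem mainTheorem12 (k l : nat) :
  2 <= k -> min_kfree_alphabet k l ->
  (forall (n : nat) (th : seq 'I_n -> seq 'I_n),
      n <= l - 1 -> antimorphic_involution th ->
      ~ exists w : nat -> 'I_n, pseudo_kth_power_free_inf th k w) /\
  (forall (n : nat) (th : seq 'I_n -> seq 'I_n),
      antimorphic_involution th -> l <= #|Trn th| ->
      exists w : nat -> 'I_n, pseudo_kth_power_free_inf th k w).
Proof.
move=> k_ge2 [[w wfree] l_min]; have k_gt0 : 0 < k by apply: ltnW.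
split=> [n th nl _ [v vfree] | n th th_inv lT].
  apply: (l_min n); last by exists v; exact: pseudo_kth_power_free_kth_power_free vfree.
  by apply: leq_ltn_trans nl _; rewrite subn1 ltn_predL (leq_ltn_trans _ (ltn_ord (w 0))).
have [f f_inj fT] := Trn_embedding lT.
exists (f \o w) => i len fw_pseudo; apply: (wfree i len).
apply: (kth_power_map_inj k_gt0 f_inj); rewrite -factor_comp.
apply: (pseudo_kth_power_Trn th_inv) fw_pseudo.
by rewrite factor_comp all_map; apply/allP => x _ /=; exact: fT.
Qed.
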